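(* Let $m_1\le m_2\le\dots\le m_k$ be nonnegative integers, $n=\sum_r m_r$, and $T_1,\dots,T_n\in\{H,L\}$ with $0\le H<L$. Let $(x_1,\dots,x_n)$ be the decision sequence output by Algorithm 1 on this input. If $i<j$ and $T_i=T_j$, then $x_i\le x_j$.
   Context: Algorithm 1 (simulation-based threshold algorithm). Input: integers $0\le m_1\le\dots\le m_k$ and a sequence $T_1,\dots,T_n$ with $n=\sum_r m_r$. Set $q^{(1)}_r=m_r$ for all $r$. For $t=1,\dots,n$: set $x_t=\mathrm{TA}(q^{(t)}_1,\dots,q^{(t)}_k;\,T_t,T_{t+1},\dots,T_n)$ and $q^{(t+1)}_r=q^{(t)}_r-\mathbf{1}(x_t=r)$ for each $r$. Output $\mathbf{x}=(x_1,\dots,x_n)$. Subroutine $\mathrm{TA}(m_1,\dots,m_k;\,S_1,\dots,S_N)$ (ThresholdAllocation), with the convention $m_0:=0$: for $\gamma=k,k-1,\dots,1$: if $m_\gamma=m_{\gamma-1}$, go to the next $\gamma$; otherwise, for $h=\gamma,\gamma+1,\dots,k$: let $Z_L=\sum_{i=1}^{h-1}\min\{m_i,m_{\gamma-1}\}$ and $Z_H=\sum_{i=\gamma}^{h}(m_i-m_{\gamma-1})$; if $|\{i\in\{1,\dots,Z_L+Z_H\}: S_i>S_1\}|\ge Z_L$, return $\gamma$ (agent to which $S_1$ is assigned). *)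

From HB Require Import structures.
From mathcomp Require Import all_boot all_order all_algebra.
Set Implicit Arguments. Unset Strict Implicit. Unset Printing Implicit Defensive.
Import Order.TTheory GRing.Theory Num.Theory.

(* Agents are numbered 1..k; the quotas m_1..m_k are stored in a
   seq nat [:: m_1; ...; m_k].  mget m i = m_i, with the convention m_0 = 0. *)
Definition mget (m : seq nat) (i : nat) : nat :=
  if i is i'.+1 then nth 0%N m i' else 0%N.

Section TA.
Variable R : realDomainType.

Definition ZL (m : seq nat) (gamma h : nat) : nat :=
  (\sum_(1 <= i < h) minn (mget m i) (mget m gamma.-1))%N.

Definition ZH (m : seq nat) (gamma h : nat) : nat :=
  (\sum_(gamma <= i < h.+1) (mget m i - mget m gamma.-1))%N.

Definition TA_test (m : seq nat) (S : seq R) (gamma h : nat) : bool :=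
  (ZL m gamma h <=
     count (fun s => nth 0%R S 0 < s)%R (take (ZL m gamma h + ZH m gamma h) S))%N.

Definition TA_ok (m : seq nat) (S : seq R) (gamma : nat) : bool :=
  (mget m gamma != mget m gamma.-1) &&
  has (TA_test m S gamma) (iota gamma (size m - gamma).+1).

(* ThresholdAllocation: the first gamma in k, k-1, ..., 1 that succeeds;
   0 if none (this never happens on the inputs of Algorithm 1). *)
Definition TA (m : seq nat) (S : seq R) : nat :=
  let gs := rev (iota 1 (size m)) in
  nth 0%N gs (find (TA_ok m S) gs).

Definition qupdate (q : seq nat) (x : nat) : seq nat :=
  mkseq (fun i => nth 0%N q i - (i.+1 == x))%N (size q).

Fixpoint alg_from (q : seq nat) (T : seq R) : seq nat :=
  match T with
  | [::] => [::]
  | _ :: T' => let x := TA q T in x :: alg_from (qupdate q x) T'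
  end.

Definition algorithm1 (m : seq nat) (T : seq R) : seq nat := alg_from m T.

End TA.

From HB Require Import structures.
From mathcomp Require Import all_boot all_order all_algebra.
From mathcomp Require Import zify.
Import Order.TTheory GRing.Theory Num.Theory.
Set Implicit Arguments. Unset Strict Implicit. Unset Printing Implicit Defensive.

(* The quota vector q stays sorted with sum equal to the number of remaining
   items, and TA always picks an agent y with q_{y-1} < q_y.  No later item
   beats an L item, so its test forces Z_L = 0: it goes to the first agent
   with a positive quota, and the quotas below that agent stay zero, so all
   later agents are at least as large.  For an H item sent to x by the test
   at (x, h), the test at (x, h) with threshold H survives all later steps:
   Z_L + Z_H = q_1 + ... + q_h - q_{x-1} drops by at most one per step; an H
   item does not raise Z_L, and an L item uses up one item above H but lowers
   Z_L by one (or makes it 0).  So at the next H item TA returns at least x. *)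

Lemma leq_sum_nat m n (F G : nat -> nat) :
  (forall i, (m <= i < n)%N -> (F i <= G i)%N) ->
  (\sum_(m <= i < n) F i <= \sum_(m <= i < n) G i)%N.
Proof.
move=> leFG; rewrite big_nat_cond [leqRHS]big_nat_cond.
by apply: leq_sum => i /andP[/leFG].
Qed.

Lemma sum_nat_eq1 m n y : (m <= y < n)%N -> (\sum_(m <= i < n) (i == y))%N = 1%N.
Proof. by move=> Hy; rewrite -big_mkcond big_nat1_eq Hy. Qed.

Lemma count_take_leq T (p : pred T) n1 n2 s :
  (n1 <= n2)%N -> (count p (take n1 s) <= count p (take n2 s))%N.
Proof.
move=> le_n12; rewrite -(take_takel s le_n12).
by rewrite -[in leqRHS](cat_take_drop n1 (take n2 s)) count_cat leq_addr.
Qed.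

Definition quota_sorted (q : seq nat) :=
  forall i j, (i <= j <= size q)%N -> (mget q i <= mget q j)%N.

Definition zero_below (q : seq nat) (g : nat) :=
  forall i, (0 < i < g)%N -> mget q i = 0%N.

Lemma quota_sorted_sorted q : sorted leq q -> quota_sorted q.
Proof.
move=> /(sorted_leq_nth leq_trans leqnn 0%N) sq [|i] [|j] //= /andP[Hij Hj].
by apply: sq; rewrite ?inE; lia.
Qed.

Lemma mget_oversize q i : (size q < i)%N -> mget q i = 0%N.
Proof. by case: i => [|i] //= Hi; rewrite nth_default. Qed.

Lemma size_qupdate q y : size (qupdate q y) = size q.
Proof. exact: size_mkseq. Qed.

Lemma mget_qupdate q y i : mget (qupdate q y) i = (mget q i - (i == y))%N.
Proof.
case: i => [|i] //=; case: (ltnP i (size q)) => Hi; first by rewrite nth_mkseq.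
by rewrite !nth_default ?size_qupdate.
Qed.

Lemma mget_qupdate_le q y i : (mget (qupdate q y) i <= mget q i)%N.
Proof. by rewrite mget_qupdate leq_subr. Qed.

Lemma mget_qupdateK q y i : (0 < mget q y)%N ->
  mget q i = (mget (qupdate q y) i + (i == y))%N.
Proof. by rewrite mget_qupdate; case: eqP => [->|_]; lia. Qed.

Lemma sumn_mget q : sumn q = (\sum_(1 <= i < (size q).+1) mget q i)%N.
Proof. by rewrite sumnE (big_nth 0%N) big_add1. Qed.

Lemma sum_mget_qupdate q y h : (0 < y <= h)%N -> (0 < mget q y)%N ->
  (\sum_(1 <= i < h.+1) mget q i = (\sum_(1 <= i < h.+1) mget (qupdate q y) i).+1)%N.
Proof.
move=> Hy qy; rewrite (eq_big_nat _ _ (fun i _ => mget_qupdateK i qy)).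
by rewrite big_split sum_nat_eq1 ?addn1 //=; lia.
Qed.

Lemma sumn_qupdate q y : (0 < mget q y)%N -> sumn (qupdate q y) = (sumn q).-1.
Proof.
move=> qy; have Hy : (0 < y <= size q)%N.
  rewrite [(y <= _)%N]leqNgt; apply/andP; split; first by case: y qy.
  by apply: contraTN qy => /mget_oversize ->.
by rewrite !sumn_mget size_qupdate (sum_mget_qupdate Hy qy).
Qed.

Lemma quota_sorted_qupdate q y : quota_sorted q ->
  (mget q y.-1 < mget q y)%N -> quota_sorted (qupdate q y).
Proof.
move=> sq qy i j; rewrite size_qupdate !mget_qupdate => /andP[le_ij le_j].
have := sq i j; rewrite le_ij le_j => /(_ isT).
case: (eqVneq i y) => [->|/eqP ne_iy]; case: (eqVneq j y) => [Ejy|_] /=; try lia.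
subst j; have := sq i y.-1; lia.
Qed.

Lemma zero_below_qupdate q y g : zero_below q g -> zero_below (qupdate q y) g.
Proof. by move=> zq i Hi; rewrite mget_qupdate zq. Qed.

Lemma exists_first_positive q : (0 < sumn q)%N ->
  exists g, [/\ (0 < g <= size q)%N, (0 < mget q g)%N & zero_below q g].
Proof.
rewrite sumn_mget => sum_gt0.
have [i] : exists2 i, i \in index_iota 1 (size q).+1 & (0 < mget q i)%N.
  apply/hasP; apply: contraTT sum_gt0 => /hasPn zero.
  by rewrite -leqNgt leqn0 big1_seq // => j /andP[_ /zero]; rewrite -eqn0Ngt => /eqP.
rewrite mem_index_iota => Hi qi.
have [g qg min_g] := @ex_minnP (fun j => 0 < mget q j)%N (ex_intro _ i qi).
exists g; split=> //; first by have := min_g i qi; case: g qg {min_g} => // g; lia.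
by move=> j Hj; apply/eqP; rewrite -leqn0 leqNgt; apply/negP => /min_g; lia.
Qed.

Lemma ZL_qupdate_le q y g h : (ZL (qupdate q y) g h <= ZL q g h)%N.
Proof.
apply: leq_sum_nat => i _.
by have := mget_qupdate_le q y i; have := mget_qupdate_le q y g.-1; lia.
Qed.

Lemma ZL_qupdate_lt q y g h : quota_sorted q -> (0 < y < g)%N -> (g <= h)%N ->
  (g <= size q)%N -> (0 < mget q y)%N -> (ZL (qupdate q y) g h < ZL q g h)%N.
Proof.
move=> sq Hy le_gh le_g qy; rewrite -addn1 -(@sum_nat_eq1 1 h y); last by lia.
rewrite /ZL -big_split; apply: leq_sum_nat => i _ /=.
rewrite (mget_qupdateK i qy); have := mget_qupdate_le q y g.-1.
case: eqP => [->|_]; last by lia.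
have := sq y g.-1; rewrite (mget_qupdateK y qy) eqxx; lia.
Qed.

Lemma ZL_ZH_sum q g h : quota_sorted q -> (0 < g <= h)%N -> (h <= size q)%N ->
  (ZL q g h + ZH q g h + mget q g.-1 = \sum_(1 <= i < h.+1) mget q i)%N.
Proof.
move=> sq /andP[g_gt0 le_gh] le_h; set a := mget q g.-1.
have ZLE : ZL q g h = (\sum_(1 <= i < g) mget q i + \sum_(g <= i < h) a)%N.
  rewrite /ZL (@big_cat_nat _ _ _ g) //; congr (_ + _)%N; apply: eq_big_nat => i Hi.
  - by apply/minn_idPl/sq; lia.
  - by apply/minn_idPr/sq; lia.
have ZHE : (ZH q g h + \sum_(g <= i < h.+1) a = \sum_(g <= i < h.+1) mget q i)%N.
  by rewrite /ZH -/a -big_split; apply: eq_big_nat => i Hi /=; rewrite subnK //; apply: sq; lia.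
rewrite [\sum_(g <= i < h.+1) a]big_nat_recr //= in ZHE.
by rewrite (@big_cat_nat _ _ _ g) //=; lia.
Qed.

Lemma ZL_ZH_qupdate q y g h :
  quota_sorted q -> quota_sorted (qupdate q y) -> (0 < g <= h)%N -> (h <= size q)%N ->
  (0 < y <= h)%N -> (0 < mget q y)%N ->
  (ZL q g h + ZH q g h <= (ZL (qupdate q y) g h + ZH (qupdate q y) g h).+1)%N.
Proof.
move=> sq sq' Hg le_h Hy qy.
have := ZL_ZH_sum sq Hg le_h; have := ZL_ZH_sum sq' Hg; rewrite size_qupdate => /(_ le_h).
by rewrite (sum_mget_qupdate Hy qy); have := mget_qupdate_le q y g.-1; lia.
Qed.

Lemma ZL_eq0 q g h : mget q g.-1 = 0%N -> ZL q g h = 0%N.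
Proof. by move=> a0; rewrite /ZL a0 big1 // => i _; rewrite minn0. Qed.

Lemma ZL_eq0_zero_below q g h : quota_sorted q -> (g <= h)%N -> (g <= size q)%N ->
  ZL q g h = 0%N -> zero_below q g.
Proof.
move=> sq le_gh le_g /eqP; rewrite /ZL sum_nat_seq_eq0 => /allP ZL0 i Hi.
have := ZL0 i; rewrite mem_index_iota => /(_ ltac:(lia)) /eqP.
by have := sq i g.-1; lia.
Qed.

Section Allocation.
Variable R : realDomainType.
Implicit Types (c s : R) (S : seq R).

(* [TA_test q S] is [passes S_1 q S]; fixing the threshold c lets the test
   be followed as the sequence is consumed. *)
Definition passes c q S g h :=
  (ZL q g h <= count (fun t => c < t)%R (take (ZL q g h + ZH q g h) S))%N.

Lemma passes_qupdate c s S q q' g h :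
  (ZL q' g h + (c < s)%R <= ZL q g h)%N ->
  (ZL q g h + ZH q g h <= (ZL q' g h + ZH q' g h).+1)%N ->
  passes c q (s :: S) g h -> passes c q' S g h.
Proof.
rewrite /passes => le_ZL le_N.
have le_take : ((ZL q g h + ZH q g h).-1 <= ZL q' g h + ZH q' g h)%N by lia.
have := count_take_leq (fun t => c < t)%R S le_take.
by case: (ZL q g h + ZH q g h)%N => [|n] /=; lia.
Qed.

Lemma passes_shift c q S x h : mget q x = mget q x.-1 -> (x <= h)%N ->
  passes c q S x.+1 h = passes c q S x h.
Proof.
move=> qx le_xh; rewrite /passes.
have -> : ZL q x.+1 h = ZL q x h by rewrite /ZL /= qx.
by rewrite /ZH [in RHS]big_ltn //= qx subnn.
Qed.

Lemma passes_max_zero_below c q S g h : quota_sorted q -> (g <= h <= size q)%N ->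
  all (fun t => t <= c)%R S -> passes c q S g h -> zero_below q g.
Proof.
move=> sq /andP[le_gh le_h] S_le; rewrite /passes.
have -> : count (fun t => c < t)%R (take (ZL q g h + ZH q g h) S) = 0%N.
  apply/eqP; rewrite -leqn0 leqNgt -has_count.
  by apply/hasPn => t /mem_take /(allP S_le); rewrite leNgt.
by rewrite leqn0 => /eqP; apply: ZL_eq0_zero_below => //; lia.
Qed.

Lemma TA_maximal q S g : (0 < g <= size q)%N -> TA_ok q S g ->
  [/\ TA_ok q S (TA q S), (0 < TA q S <= size q)%N & (g <= TA q S)%N].
Proof.
move=> Hg ok_g; rewrite /TA; set gs := rev (iota 1 (size q)).
have nth_gs i : (i < size q)%N -> nth 0%N gs i = (size q - i)%N.
  by move=> Hi; rewrite nth_rev ?size_iota // nth_iota; lia.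
have has_ok : has (TA_ok q S) gs by apply/hasP; exists g; rewrite // mem_rev mem_iota; lia.
have lt_find : (find (TA_ok q S) gs < size q)%N.
  by rewrite -[size q](size_iota 1) -size_rev -has_find.
split; first exact: nth_find.
  by rewrite nth_gs //; lia.
have : (find (TA_ok q S) gs <= size q - g)%N.
  rewrite leqNgt; apply/negP => /(before_find 0%N); rewrite nth_gs; last lia.
  have -> : (size q - (size q - g) = g)%N by lia.
  by rewrite ok_g.
by rewrite nth_gs //; lia.
Qed.

Lemma TA_ok_first_positive q S g : (0 < g <= size q)%N -> (0 < mget q g)%N ->
  zero_below q g -> TA_ok q S g.
Proof.
move=> Hg qg zq; have q_pred : mget q g.-1 = 0%N.
  by case: g Hg qg zq => [|[|g]] //= Hg _ zq; apply: (zq g.+1); lia.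
apply/andP; split; first by rewrite q_pred -lt0n.
apply/hasP; exists g; first by rewrite mem_iota; lia.
by rewrite /TA_test ZL_eq0.
Qed.

Lemma TA_ok_zero_below q S g y : zero_below q g -> TA_ok q S y -> (g <= y)%N.
Proof.
move=> zq /andP[+ _]; apply: contraTT; rewrite -ltnNge => lt_yg.
have q0 i : (i <= y)%N -> mget q i = 0%N by case: i => // i Hi; apply: zq; lia.
by rewrite !q0 ?leq_pred.
Qed.

Lemma TA_ok_witness q S g : (g <= size q)%N -> TA_ok q S g ->
  exists2 h, (g <= h <= size q)%N & TA_test q S g h.
Proof.
by move=> Hg /andP[_ /hasP[h]]; rewrite mem_iota => Hh; exists h => //; lia.
Qed.

Lemma TA_valid q s S : quota_sorted q -> sumn q = size (s :: S) ->
  [/\ TA_ok q (s :: S) (TA q (s :: S)), (0 < TA q (s :: S) <= size q)%N,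
      (mget q (TA q (s :: S)).-1 < mget q (TA q (s :: S)))%N &
      forall g, zero_below q g -> (g <= TA q (s :: S))%N].
Proof.
move=> sq sum_q; have [|g [Hg qg zq]] := exists_first_positive (q := q); first by rewrite sum_q.
have [ok_y Hy _] := TA_maximal Hg (TA_ok_first_positive (s :: S) Hg qg zq).
split=> // [|g' zq']; last exact: TA_ok_zero_below ok_y.
case/andP: (ok_y) => ne_y _; rewrite ltn_neqAle eq_sym ne_y /=.
by apply: sq; lia.
Qed.

Lemma TA_next q s S : quota_sorted q -> sumn q = size (s :: S) ->
  quota_sorted (qupdate q (TA q (s :: S))) /\ sumn (qupdate q (TA q (s :: S))) = size S.
Proof.
move=> sq sum_q; have [_ _ lt_y _] := TA_valid sq sum_q.
split; first exact: quota_sorted_qupdate.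
by rewrite sumn_qupdate ?sum_q //; apply: leq_ltn_trans lt_y.
Qed.

Lemma TA_zero_below_of_max q s S : quota_sorted q -> sumn q = size (s :: S) ->
  all (fun t => t <= s)%R S -> zero_below q (TA q (s :: S)).
Proof.
move=> sq sum_q S_le; have [ok_y Hy _ _] := TA_valid sq sum_q.
have [|h Hh pass] := TA_ok_witness _ ok_y; first by case/andP: Hy.
by apply: (passes_max_zero_below (c := s)) pass => //=; rewrite lexx.
Qed.

Lemma TA_ge_of_passes q s S x h : quota_sorted q -> sumn q = size (s :: S) ->
  (0 < x <= h)%N -> (h <= size q)%N -> passes s q (s :: S) x h -> (x <= TA q (s :: S))%N.
Proof.
move=> sq sum_q + le_h; have [_ _ _ ge_zero] := TA_valid sq sum_q.
have ok_le y : (0 < y <= h)%N -> mget q y != mget q y.-1 -> passes s q (s :: S) y h ->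
    (y <= TA q (s :: S))%N.
  move=> Hy ne_y pass; have Hy' : (0 < y <= size q)%N by lia.
  have ok_y : TA_ok q (s :: S) y.
    by rewrite /TA_ok ne_y; apply/hasP; exists h => //; rewrite mem_iota; lia.
  by have [] := TA_maximal Hy' ok_y.
move Ed : (h - x)%N => d; elim: d x Ed => [|d IH] x Ed Hx pass;
  (have [eq_x|ne_x] := eqVneq (mget q x) (mget q x.-1); last exact: ok_le).
- have ex : x = h by lia.
  have ZH0 : ZH q x h = 0%N by rewrite -ex /ZH big_nat1 eq_x subnn.
  have ZL0 : ZL q x h = 0%N.
    move: pass; rewrite /passes ZH0 addn0; case: (ZL q x h) => // n.
    rewrite [take _ _]/= /= ltxx add0n => /leq_trans/(_ (count_size _ _)).
    by rewrite size_take_min; lia.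
  have zq : zero_below q x by apply: (ZL_eq0_zero_below (h := h)) => //; lia.
  have q_pred : mget q x.-1 = 0%N by case: (posnP x.-1) => [->|?] //; apply: zq; lia.
  apply/ltnW/ge_zero => i /andP[i_gt0]; rewrite ltnS leq_eqVlt => /predU1P[->|lt_ix].
    by rewrite eq_x.
  by apply: zq; lia.
- apply/ltnW/IH; [lia|lia|].
  by rewrite passes_shift //; lia.
Qed.

Lemma passes_after_TA q s S : quota_sorted q -> sumn q = size (s :: S) ->
  exists2 h, (TA q (s :: S) <= h <= size q)%N &
    passes s (qupdate q (TA q (s :: S))) S (TA q (s :: S)) h.
Proof.
move=> sq sum_q; have [ok_y Hy lt_y _] := TA_valid sq sum_q.
have [sq' _] := TA_next sq sum_q.
have [|h Hh pass] := TA_ok_witness _ ok_y; first by case/andP: Hy.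
exists h => //; apply: passes_qupdate pass; first by rewrite ltxx addn0 ZL_qupdate_le.
by apply: ZL_ZH_qupdate => //; lia.
Qed.

Lemma passes_qupdate_TA c q s S g h : (c < s)%R -> quota_sorted q ->
  sumn q = size (s :: S) -> all (fun t => t <= s)%R S -> (0 < g <= h)%N -> (h <= size q)%N ->
  passes c q (s :: S) g h -> passes c (qupdate q (TA q (s :: S))) S g h.
Proof.
move=> lt_cs sq sum_q S_le Hg le_h pass.
have [_ Hy lt_y _] := TA_valid sq sum_q; have [sq' _] := TA_next sq sum_q.
have zq := TA_zero_below_of_max sq sum_q S_le.
set y := TA q (s :: S) in Hy lt_y sq' zq *.
have [le_gy|lt_yg] := leqP g y.
  rewrite /passes ZL_eq0 // mget_qupdate.
  by case: (posnP g.-1) => [->|?] //; rewrite zq //; lia.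
apply: passes_qupdate pass; first by rewrite lt_cs addn1; apply: ZL_qupdate_lt => //; lia.
by apply: ZL_ZH_qupdate => //; lia.
Qed.

Lemma alg_from_ge_zero_below q S g : quota_sorted q -> sumn q = size S ->
  zero_below q g -> forall p, (p < size S)%N -> (g <= nth 0%N (alg_from q S) p)%N.
Proof.
elim: S q => [|s S IH] q sq sum_q zq [|p] //= lt_p.
  by have [_ _ _] := TA_valid sq sum_q; apply.
have [sq' sum_q'] := TA_next sq sum_q.
exact: IH sq' sum_q' (zero_below_qupdate _ zq) p lt_p.
Qed.

Variables H L : R.
Hypothesis lt_HL : (H < L)%R.

Local Notation two_valued S := (all (fun s => (s == H) || (s == L)) S).

Lemma two_valued_le S : two_valued S -> all (fun t => t <= L)%R S.
Proof. by apply: sub_all => t /orP[] /eqP ->; rewrite ?lexx ?ltW. Qed.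

Lemma alg_from_ge_passes q S x h : quota_sorted q -> sumn q = size S -> two_valued S ->
  (0 < x <= h)%N -> (h <= size q)%N -> passes H q S x h ->
  forall p, (p < size S)%N -> nth 0%R S p = H -> (x <= nth 0%N (alg_from q S) p)%N.
Proof.
elim: S q x h => [|s S IH] q x h sq sum_q //= /andP[s_HL S_HL] Hx le_h pass
  [|p] //= lt_p S_p.
  by rewrite S_p in pass *; apply: TA_ge_of_passes pass.
have [sq' sum_q'] := TA_next sq sum_q.
case/orP: s_HL => /eqP s_eq; subst s.
  have [_ Hy _ _] := TA_valid sq sum_q; have [h' Hh' pass'] := passes_after_TA sq sum_q.
  apply: leq_trans (TA_ge_of_passes sq sum_q Hx le_h pass) _.
  by apply: (IH _ _ h') => //; rewrite ?size_qupdate; lia.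
apply: (IH _ x h) => //; first by rewrite size_qupdate.
exact: passes_qupdate_TA (two_valued_le S_HL) Hx le_h pass.
Qed.

Lemma alg_from_two_valued_homo q S : quota_sorted q -> sumn q = size S -> two_valued S ->
  forall i j, (i < j)%N -> (j < size S)%N -> nth 0%R S i = nth 0%R S j ->
  (nth 0%N (alg_from q S) i <= nth 0%N (alg_from q S) j)%N.
Proof.
elim: S q => [|s S IH] q sq sum_q //= /andP[s_HL S_HL] [|i] [|j] //= lt_ij lt_j S_ij;
  last first.
  by have [sq' sum_q'] := TA_next sq sum_q; apply: IH.
case/orP: s_HL S_ij sum_q => /eqP -> S_j sum_q; have [sq' sum_q'] := TA_next sq sum_q.
  have [_ Hy _ _] := TA_valid sq sum_q; have [h Hh pass] := passes_after_TA sq sum_q.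
  by apply: (alg_from_ge_passes (h := h)) => //; rewrite ?size_qupdate; lia.
apply: alg_from_ge_zero_below => //.
exact/zero_below_qupdate/(TA_zero_below_of_max sq sum_q (two_valued_le S_HL)).
Qed.

End Allocation.

Theorem lemma5 (R : realDomainType) (H L : R) (m : seq nat) (T : seq R) :
  (0 <= H)%R -> (H < L)%R ->
  sorted leq m ->
  all (fun s => (s == H) || (s == L)) T ->
  size T = sumn m ->
  forall i j : nat, (i < j)%N -> (j < size T)%N ->
  nth 0%R T i = nth 0%R T j ->
  (nth 0%N (algorithm1 m T) i <= nth 0%N (algorithm1 m T) j)%N.
Proof.
move=> _ lt_HL /quota_sorted_sorted sm T_HL size_T.
exact: (alg_from_two_valued_homo lt_HL sm (esym size_T) T_HL).
Qed.
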